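(* Let $E/F$ be a quadratic extension of fields of characteristic $0$ and let $\gamma\in\mathrm{GL}_n(E)$ be normal with $\bar\gamma\gamma$ regular semisimple. Then $T_\gamma=\{g\in\mathrm{GL}_n(E):g^{-1}\gamma\bar g=\gamma\}$ is contained in $\mathrm{GL}_n(F)$ and in fact equals the centralizer of $\bar\gamma\gamma$ in $\mathrm{GL}_n(F)$.
   Context: $x\mapsto\bar x$ denotes the nontrivial automorphism of $E/F$ applied entrywise. $\gamma$ is normal if $\bar\gamma\gamma\in\mathrm{GL}_n(F)$. *)

From HB Require Import structures.
From mathcomp Require Import all_boot all_order all_algebra all_field.
Set Implicit Arguments. Unset Strict Implicit. Unset Printing Implicit Defensive.
Import GRing.Theory.
Local Open Scope ring_scope.

(* A square matrix over a field is regular semisimple when its characteristic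
   polynomial is separable (n distinct eigenvalues over an algebraic closure). *)
Definition regular_semisimple (K : fieldType) (n : nat) (A : 'M[K]_n) : Prop :=
  separable_poly (char_poly A).

(* The E-matrix g lies in GL_n(F): invertible with all entries in F (= 1%VS). *)
Definition in_GLF (F : fieldType) (E : fieldExtType F) (n : nat) (g : 'M[E]_n) : Prop :=
  g \in unitmx /\ forall i j, g i j \in (1%VS : {vspace E}).

Definition mx_bar (F : fieldType) (E : fieldExtType F) (s : E -> E) (n : nat)
  (A : 'M[E]_n) : 'M[E]_n := map_mx s A.

Definition is_normal (F : fieldType) (E : fieldExtType F) (s : E -> E) (n : nat)
  (gam : 'M[E]_n) : Prop :=
  gam \in unitmx /\ in_GLF (mx_bar s gam *m gam).

Definition T_gamma (F : fieldType) (E : fieldExtType F) (s : E -> E) (n : nat)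
  (gam : 'M[E]_n) (g : 'M[E]_n) : Prop :=
  g \in unitmx /\ invmx g *m gam *m mx_bar s g = gam.

Definition centralizer_GLF (F : fieldType) (E : fieldExtType F) (n : nat)
  (A : 'M[E]_n) (g : 'M[E]_n) : Prop :=
  in_GLF g /\ g *m A = A *m g.

From HB Require Import structures.
From mathcomp Require Import all_boot all_order all_algebra all_field.
From Stdlib Require Import Classical.
Set Implicit Arguments. Unset Strict Implicit. Unset Printing Implicit Defensive.
Import GRing.Theory.
Local Open Scope ring_scope.

(* The linear-algebra heart is that the centralizer of a matrix A with separable
   characteristic polynomial is commutative.  Over a field where char_poly A
   splits, A is diagonalizable with pairwise distinct eigenvalues, so everything
   commuting with A is diagonal in the same basis; in general we pass to a
   splitting field of char_poly A, built by iterated adjunction of roots.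

   For the quadratic extension E/F with conjugation s, s is an involution whose
   fixed field is exactly F, so a matrix over E lies over F iff it is bar-fixed.
   If g lies in T_gamma then gamma bar(g) = g gamma; hence bar(g) and gamma both
   commute with A, hence with each other, which forces bar(g) = g, i.e. g lies
   in GL_n(F), and then g commutes with A.  Conversely an F-rational g commuting
   with A commutes with gamma, so g^-1 gamma bar(g) = gamma. *)

Lemma char_poly_conjmx (K : fieldType) n (P A : 'M[K]_n) : P \in unitmx ->
  char_poly (conjmx P A) = char_poly A.
Proof.
move=> Pu; rewrite conjumx // /char_poly /char_poly_mx.
have -> : 'X%:M - map_mx polyC (P *m A *m invmx P) =
    map_mx polyC P *m ('X%:M - map_mx polyC A) *m map_mx polyC (invmx P).
  rewrite mulmxBr mulmxBl !map_mxM; congr (_ - _).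
  by rewrite scalar_mxC -mulmxA -map_mxM mulmxV // map_mx1 mulmx1.
rewrite !det_mulmx !det_map_mx mulrC mulrA -rmorphM /= -det_mulmx mulVmx //.
by rewrite det1 mul1r.
Qed.

Lemma comm_mx_conjmx (K : fieldType) n (P X Y : 'M[K]_n) : P \in unitmx ->
  comm_mx (conjmx P X) (conjmx P Y) -> comm_mx X Y.
Proof.
move=> Pu; rewrite /comm_mx -!conjmxM ?inE ?stablemx_unit // => eqXY.
by rewrite -[X *m Y](conjmxK _ Pu) eqXY conjmxK.
Qed.

Lemma injective_diag_of_separable (K : fieldType) n (d : 'rV[K]_n) :
  separable_poly (char_poly (diag_mx d)) -> injective (d 0).
Proof.
rewrite char_poly_trig ?diag_mx_is_trig //.
under eq_bigr => i _ do rewrite mxE eqxx mulr1n.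
rewrite -(big_map (d 0) predT (fun r => 'X - r%:P)) separable_prod_XsubC.
by move=> uniq_d; apply/injectiveP; rewrite /injectiveb /dinjectiveb enumT.
Qed.

Lemma comm_diag_is_diag (R : idomainType) n (d : 'rV[R]_n) (M : 'M[R]_n) :
  injective (d 0) -> comm_mx M (diag_mx d) -> is_diag_mx M.
Proof.
move=> d_inj /matrixP comm_Md; apply/is_diag_mxP => i j ij.
have /eqP := comm_Md i j; rewrite mul_mx_diag mul_diag_mx.
rewrite !mxE [M i j * _]mulrC -subr_eq0 -mulrBl mulf_eq0 subr_eq0.
case/orP => [/eqP /d_inj eq_ji | /eqP //].
by rewrite eq_ji eqxx in ij.
Qed.

(* If char_poly A splits into distinct linear factors, matrices commuting with A
   commute with each other: diagonalize A and apply the previous lemma. *)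
Lemma comm_of_split_separable (L : fieldType) n (A X Y : 'M[L]_n.+1) (rs : seq L) :
  separable_poly (char_poly A) -> char_poly A = \prod_(r <- rs) ('X - r%:P) ->
  comm_mx X A -> comm_mx Y A -> comm_mx X Y.
Proof.
move=> sepA splitA XA YA.
have [P Pu /(diagonalizable_forLR Pu) [d A_eq]] : diagonalizable A.
  apply/diagonalizableP; exists rs; first by rewrite -separable_prod_XsubC -splitA.
  by rewrite -splitA mxminpoly_dvd_char.
have conjA : conjmx P A = diag_mx d by rewrite A_eq conjmxVK.
have d_inj : injective (d 0).
  by apply: injective_diag_of_separable; rewrite -conjA char_poly_conjmx.
have diag_conj Z : comm_mx Z A -> is_diag_mx (conjmx P Z).
  move=> ZA; apply: (comm_diag_is_diag d_inj).
  by rewrite -conjA /comm_mx -!conjmxM ?inE ?stablemx_unit // ZA.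
apply: (comm_mx_conjmx Pu).
have [/diag_mxP [e ->] /diag_mxP [f ->]] := (diag_conj X XA, diag_conj Y YA).
exact: diag_mx_comm.
Qed.

Lemma exists_irreducible_factor (K : fieldType) (p : {poly K}) :
  (1 < size p)%N -> exists2 q : {poly K}, irreducible_poly q & q %| p.
Proof.
have [m] := ubnP (size p); elim: m p => // m IH p size_p p_gt1.
have [irr_p | red_p] := classic (irreducible_poly p); first by exists p.
have [q] : exists q : {poly K}, ~ (size q != 1 -> q %| p -> q %= p).
  by apply: not_all_ex_not => q_triv; apply: red_p.
move=> /(imply_to_and (size q != 1)) [q_n1 /(imply_to_and (q %| p)) [q_dvd_p q_not_p]].
have p_neq0 : p != 0 by rewrite -size_poly_gt0 ltnW.
have q_neq0 : q != 0 by apply: contra_neq p_neq0 => q0; apply/eqP; rewrite -dvd0p -q0.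
have q_lt_p : (size q < size p)%N.
  rewrite ltn_neqAle dvdp_leq // andbT dvdp_size_eqp //.
  by apply/negP => /q_not_p.
have q_gt1 : (1 < size q)%N by rewrite ltn_neqAle eq_sym q_n1 size_poly_gt0.
have [|r irr_r r_dvd_q] := IH q _ q_gt1; first exact: leq_trans q_lt_p size_p.
by exists r; last exact: dvdp_trans r_dvd_q q_dvd_p.
Qed.

Lemma irredp_scale (K : fieldType) (c : K) (q : {poly K}) :
  c != 0 -> irreducible_poly q -> irreducible_poly (c *: q).
Proof.
move=> c_neq0 [q_gt1 q_irr]; split; first by rewrite size_scale.
move=> r r_n1; rewrite dvdpZr // => /(q_irr _ r_n1) r_q.
by apply: eqp_trans r_q _; rewrite eqp_sym eqp_scale.
Qed.

(* Kronecker's construction: K[X]/(q) for a monic irreducible factor q of p is a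
   field extension in which p acquires a root. *)
Lemma exists_root_extension (K : fieldType) (p : {poly K}) : (1 < size p)%N ->
  exists (L : fieldType) (f : {rmorphism K -> L}) (a : L), root (map_poly f p) a.
Proof.
move=> p_gt1; have [q irr_q q_dvd_p] := exists_irreducible_factor p_gt1.
have lq_neq0 : lead_coef q != 0 by rewrite lead_coef_eq0 irredp_neq0.
pose mq := (lead_coef q)^-1 *: q.
have mq_monic : mq \is monic by rewrite monicE lead_coefZ mulVf.
have mq_irr : irreducible_poly mq by apply: irredp_scale; rewrite ?invr_eq0.
have mq_dvd_p : mq %| p by rewrite dvdpZl ?invr_eq0.
pose L : fieldType := {poly %/ mq with (mq_irr, mq_monic)}.
exists L, (qpolyC mq), (in_qpoly mq 'X).
have /dvdpP [r ->] := mq_dvd_p.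
rewrite rmorphM /= rootM; apply/orP; right.
rewrite /root -in_qpoly_comp_horner comp_polyXr.
apply/eqP/val_inj => /=; rewrite mk_monicE //.
apply: Pdiv.CommonRing.rmodpp; exact: mulrC.
Qed.

Lemma exists_splitting_extension (K : fieldType) (p : {poly K}) : p \is monic ->
  exists (L : fieldType) (f : {rmorphism K -> L}) (rs : seq L),
    map_poly f p = \prod_(r <- rs) ('X - r%:P).
Proof.
have [m] := ubnP (size p); elim: m K p => // m IH K p size_p p_monic.
have [p_le1 | p_gt1] := leqP (size p) 1.
  have p_eq1 : p = 1.
    by move: p_monic; rewrite (size1_polyC p_le1) monicE lead_coefC => /eqP ->.
  by exists K, idfun, [::]; rewrite big_nil p_eq1 rmorph1.
have [L1 [f1 [a a_root]]] := exists_root_extension p_gt1.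
have /factor_theorem [p1 p_fact] := a_root.
have p1_monic : p1 \is monic.
  by rewrite -(monicMr _ (monicXsubC a)) -p_fact monic_map.
have size_p1 : size p = (size p1).+1.
  rewrite -(size_map_poly f1) p_fact size_mul ?monic_neq0 ?monicXsubC //.
  by rewrite size_XsubC addn2.
have [|L2 [f2 [rs p1_split]]] := IH L1 p1 _ p1_monic; first by rewrite -ltnS -size_p1.
exists L2, (f2 \o f1)%FUN, (f2 a :: rs).
rewrite map_poly_comp p_fact rmorphM /= p1_split big_cons mulrC rmorphB /=.
by rewrite map_polyX map_polyC.
Qed.

(* The centralizer of a matrix with separable characteristic polynomial is
   commutative: reduce to a splitting field, where matrix mapping is injective. *)
Lemma comm_of_separable_char_poly (K : fieldType) n (A X Y : 'M[K]_n) :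
  separable_poly (char_poly A) -> comm_mx X A -> comm_mx Y A -> comm_mx X Y.
Proof.
case: n => [|n] in A X Y * => sepA XA YA; first by apply/matrixP => -[].
have [L [f [rs split_A]]] := exists_splitting_extension (char_poly_monic A).
apply: (@map_mx_inj _ _ f); rewrite /comm_mx !map_mxM.
apply: (@comm_of_split_separable _ _ (map_mx f A) _ _ rs).
- by rewrite -map_char_poly separable_map.
- by rewrite -map_char_poly.
- by rewrite /comm_mx -!map_mxM XA.
- by rewrite /comm_mx -!map_mxM YA.
Qed.

Section QuadraticConjugation.
Variables (F : fieldType) (E : fieldExtType F) (s : {rmorphism E -> E}).
Hypothesis s_fixF : forall a : F, s (a%:A) = a%:A.
Hypothesis dimE : \dim {:E} = 2%N.
Hypothesis s_nontriv : exists x : E, s x != x.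

Lemma s_fix_base x : x \in (1%VS : {vspace E}) -> s x = x.
Proof. by move/vlineP => [k ->]; exact: s_fixF. Qed.

Lemma map_poly_fix_base (p : {poly E}) : p \is a polyOver (1%VS : {vspace E}) ->
  map_poly s p = p.
Proof.
by move/polyOverP => p_base; apply/polyP => i; rewrite coef_map /= s_fix_base.
Qed.

(* s is an involution: y, s y, s (s y) are roots of the minimal polynomial of y
   over F, which has degree at most 2, so two of them coincide. *)
Lemma s_involutive : involutive s.
Proof.
move=> y; set q := minPoly 1 y.
have s_q : map_poly s q = q by apply: map_poly_fix_base; exact: minPolyOver.
have q_y : root q y by exact: root_minPoly.
have q_sy : root q (s y) by rewrite -s_q rmorph_root.
have q_ssy : root q (s (s y)) by rewrite -s_q rmorph_root.
have size_q : (size q <= 3)%N.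
  rewrite /q size_minPoly ltnS.
  have := dim_Fadjoin 1 y; rewrite dimv1 muln1 => <-.
  by rewrite -dimE dimvS // subvf.
have q_neq0 : q != 0 by rewrite -size_poly_gt0 size_minPoly.
have [sy_y|sy_n1] := eqVneq (s y) y; first by rewrite !sy_y.
have [//|ssy_n2] := eqVneq (s (s y)) y.
have ssy_n3 : s (s y) != s y by apply: contra sy_n1 => /eqP /fmorph_inj ->.
have := max_poly_roots q_neq0 (rs := [:: y; s y; s (s y)]).
rewrite /= q_y q_sy q_ssy /= !inE !negb_or eq_sym sy_n1 eq_sym ssy_n2 eq_sym ssy_n3.
by rewrite ltnNge size_q => /(_ isT isT).
Qed.

(* The fixed field of s is F: an element outside F generates E over F, so if it
   were fixed then s would be the identity. *)
Lemma s_fixedP y : reflect (s y = y) (y \in (1%VS : {vspace E})).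
Proof.
apply: (iffP idP) => [|sy]; first exact: s_fix_base.
apply: contraT => y_notin; case: s_nontriv => x /eqP [].
have : x \in <<1; y>>%VS.
  suff -> : <<1; y>>%VS = fullv by exact: memvf.
  apply/eqP; rewrite eqEdim subvf /= dim_Fadjoin dimv1 muln1 dimE.
  by rewrite ltn_neqAle eq_sym adjoin_deg_eq1 y_notin.
move/Fadjoin_polyP => [p p_base ->].
by rewrite -horner_map /= map_poly_fix_base // sy.
Qed.

Lemma mx_barM n (M N : 'M[E]_n) : mx_bar s (M *m N) = mx_bar s M *m mx_bar s N.
Proof. exact: map_mxM. Qed.

Lemma mx_barK n : involutive (@mx_bar F E s n).
Proof. by move=> M; apply/matrixP => i j; rewrite !mxE s_involutive. Qed.

Lemma mx_bar_fixedP n (M : 'M[E]_n) :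
  mx_bar s M = M <-> forall i j, M i j \in (1%VS : {vspace E}).
Proof.
split=> [/matrixP M_fix i j | M_base]; last first.
  by apply/matrixP => i j; rewrite mxE; apply/s_fixedP.
by apply/s_fixedP; have := M_fix i j; rewrite mxE.
Qed.

Section TwistedCentralizer.
Variables (n : nat) (gam : 'M[E]_n).
Local Notation A := (mx_bar s gam *m gam).
Hypotheses (gam_unit : gam \in unitmx) (A_fixed : mx_bar s A = A).
Hypothesis A_sep : separable_poly (char_poly A).

(* gamma bar(gamma) = bar(A) = A, so gamma commutes with A. *)
Lemma gam_comm_A : comm_mx gam A.
Proof.
have gam_bar : gam *m mx_bar s gam = A by rewrite -[RHS]A_fixed mx_barM mx_barK.
by rewrite /comm_mx mulmxA gam_bar.
Qed.

Lemma T_gamma_twist g : T_gamma s gam g -> gam *m mx_bar s g = g *m gam.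
Proof. by move=> [g_unit g_twist]; rewrite -{2}g_twist !mulmxA mulmxV // mul1mx. Qed.

Lemma T_gamma_bar_comm_A g : T_gamma s gam g -> comm_mx (mx_bar s g) A.
Proof.
move=> /T_gamma_twist twist.
have twist_bar : mx_bar s gam *m g = mx_bar s g *m mx_bar s gam.
  by rewrite -[in LHS](mx_barK g) -mx_barM twist mx_barM.
by rewrite /comm_mx mulmxA -twist_bar -!mulmxA twist.
Qed.

(* Elements of T_gamma are bar-fixed: bar(g) commutes with gamma, since both
   commute with A, and gamma bar(g) = g gamma. *)
Lemma T_gamma_fixed g : T_gamma s gam g -> mx_bar s g = g.
Proof.
move=> Tg; have := comm_of_separable_char_poly A_sep gam_comm_A (T_gamma_bar_comm_A Tg).
rewrite /comm_mx T_gamma_twist // => /(congr1 (mulmx^~ (invmx gam))).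
by rewrite !mulmxK.
Qed.

Lemma T_gamma_centralizer g : T_gamma s gam g <-> centralizer_GLF A g.
Proof.
split=> [Tg | [[g_unit /mx_bar_fixedP g_fixed] g_A]].
  have g_fixed := T_gamma_fixed Tg.
  split; last by rewrite -g_fixed; exact: T_gamma_bar_comm_A.
  by split; [case: Tg | apply/mx_bar_fixedP].
split=> //; rewrite g_fixed.
have g_gam : comm_mx g gam.
  by apply: (comm_of_separable_char_poly A_sep); last exact: gam_comm_A.
by rewrite -mulmxA -g_gam mulKmx.
Qed.

End TwistedCentralizer.

End QuadraticConjugation.

Theorem mainTheorem9 (F : fieldType) (E : fieldExtType F)
  (charF0 : [pchar F] =i pred0)
  (dimE : \dim {:E} = 2%N)
  (s : {rmorphism E -> E})
  (s_fixF : forall a : F, s (a%:A) = a%:A)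
  (s_bij : bijective s)
  (s_nontriv : exists x : E, s x != x)
  (n : nat) (gam : 'M[E]_n)
  (gam_normal : is_normal s gam)
  (gam_rs : regular_semisimple (mx_bar s gam *m gam)) :
  (forall g : 'M[E]_n, T_gamma s gam g -> in_GLF g) /\
  (forall g : 'M[E]_n, T_gamma s gam g <-> centralizer_GLF (mx_bar s gam *m gam) g).
Proof.
have [gam_unit [_ /(mx_bar_fixedP s_fixF dimE s_nontriv) A_fixed]] := gam_normal.
have centralizer := T_gamma_centralizer s_fixF dimE s_nontriv gam_unit A_fixed gam_rs.
by split=> // g /centralizer [].
Qed.
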